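(* Let $\omega_N=(\alpha^{+,(N)},\alpha^{-,(N)},\gamma_1^{(N)},\delta^{(N)})\in\hat\Omega$ and $\omega=(\alpha^+,\alpha^-,\gamma_1,\delta)\in\hat\Omega$, and suppose $\omega_N\to\omega$ coordinate-wise as $N\to\infty$. Then $$\sum_{i\ge1}\left|\alpha_i^{+,(N)}-\alpha_i^+\right|^3\xrightarrow[N\to\infty]{}0,\qquad \sum_{i\ge1}\left|\alpha_i^{-,(N)}-\alpha_i^-\right|^3\xrightarrow[N\to\infty]{}0.$$
   Context: $\hat\Omega$ is the set of $(\alpha^+,\alpha^-,\gamma_1,\delta)$ with $\alpha^\pm=(\alpha_1^\pm\ge\alpha_2^\pm\ge\dots\ge0)$ non-increasing sequences of non-negative reals, $\gamma_1\in\mathbb{R}$, $\delta\ge0$, and $\sum_i(\alpha_i^+)^2+\sum_i(\alpha_i^-)^2\le\delta$. Coordinate-wise convergence means convergence of each $\alpha_i^\pm$, of $\gamma_1$ and of $\delta$. *)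

From Stdlib Require Import Reals.
From Coquelicot Require Import Coquelicot.
Open Scope R_scope.

(* A non-increasing sequence of non-negative reals, indexed from 0
   (index i here corresponds to alpha_{i+1} in the paper). *)
Definition nonincr_nonneg (a : nat -> R) : Prop :=
  (forall i, 0 <= a i) /\ (forall i, a (S i) <= a i).

Definition in_Omega_hat (ap am : nat -> R) (g1 d : R) : Prop :=
  nonincr_nonneg ap /\ nonincr_nonneg am /\ 0 <= d /\
  ex_series (fun i => (ap i)^2) /\ ex_series (fun i => (am i)^2) /\
  Series (fun i => (ap i)^2) + Series (fun i => (am i)^2) <= d.

(* A non-increasing sequence with sum a_k^2 <= B satisfies (i+1) a_i^2 <= B, so all
   the sequences involved are at most eta beyond an index K depending only on eta and
   a common bound B for their squared l^2 norms.  For 0 <= x, y <= eta one has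
   |x - y|^3 <= eta (x^2 + y^2), hence the tails of sum |a^(N)_i - a_i|^3 are at most
   2 eta B uniformly in N, while each of the finitely many head terms tends to 0. *)

From Stdlib Require Import Reals Lra Lia.
From Coquelicot Require Import Coquelicot.
Open Scope R_scope.

Lemma Series_ge_0 (a : nat -> R) :
  (forall n, 0 <= a n) -> ex_series a -> 0 <= Series a.
Proof.
  intros Ha Ex.
  rewrite <- (Rmult_0_l (Series a)), <- Series_scal_l.
  apply Series_le; [|exact Ex].
  intros n; rewrite Rmult_0_l; split; [lra | apply Ha].
Qed.

Lemma Series_head_tail_le (a : nat -> R) (n : nat) :
  (forall k, 0 <= a k) -> ex_series a ->
  sum_f_R0 a n <= Series a /\ Series (fun k => a (S n + k)%nat) <= Series a.
Proof.
  intros Ha Ex.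
  rewrite (Series_incr_n a (S n)) by (lia || exact Ex); simpl Nat.pred.
  assert (0 <= sum_f_R0 a n) by (apply cond_pos_sum, Ha).
  assert (0 <= Series (fun k => a (S n + k)%nat)).
  { apply Series_ge_0; [intros; apply Ha | apply ex_series_incr_n, Ex]. }
  lra.
Qed.

Lemma is_lim_seq_bounded_above (u : nat -> R) (l : R) :
  is_lim_seq u l -> exists M, forall n, u n <= M.
Proof.
  intros Hu; apply is_lim_seq_Reals in Hu.
  destruct (cauchy_bound u (CV_Cauchy u (exist _ l Hu))) as [M HM].
  exists M; intros n; apply HM; exists n; reflexivity.
Qed.

Lemma is_lim_seq_pow_0 (u : nat -> R) (n : nat) :
  is_lim_seq u 0 -> is_lim_seq (fun N => u N ^ S n) 0.
Proof.
  intros Hu; induction n as [|n IH].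
  - apply (is_lim_seq_ext u); [intros; simpl; ring | exact Hu].
  - rewrite <- (Rmult_0_l 0). exact (is_lim_seq_mult' _ _ _ _ Hu IH).
Qed.

Lemma is_lim_seq_sum_f_R0 (u : nat -> nat -> R) (l : nat -> R) (n : nat) :
  (forall i, is_lim_seq (fun N => u N i) (l i)) ->
  is_lim_seq (fun N => sum_f_R0 (u N) n) (sum_f_R0 l n).
Proof.
  intros Hu; induction n as [|n IH]; [exact (Hu 0%nat)|].
  exact (is_lim_seq_plus' _ _ _ _ IH (Hu (S n))).
Qed.

Lemma is_lim_seq_Series_0 (c : nat -> nat -> R) :
  (forall N k, 0 <= c N k) -> (forall N, ex_series (c N)) ->
  (forall k, is_lim_seq (fun N => c N k) 0) ->
  (forall eps, 0 < eps -> exists K, forall N, Series (fun k => c N (S K + k)%nat) <= eps) ->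
  is_lim_seq (fun N => Series (c N)) 0.
Proof.
  intros Hc Ex Hlim Htail.
  apply is_lim_seq_spec; intros eps.
  destruct (Htail (eps / 2)) as [K HK]; [pose proof (cond_pos eps); lra|].
  assert (Hhead := is_lim_seq_sum_f_R0 c (fun _ => 0) K Hlim).
  rewrite sum_cte, Rmult_0_l in Hhead.
  apply is_lim_seq_spec in Hhead.
  destruct (Hhead (pos_div_2 eps)) as [N0 HN0].
  exists N0; intros N HN; specialize (HN0 N HN); simpl in HN0.
  rewrite Rminus_0_r in HN0 |- *.
  rewrite (Series_incr_n (c N) (S K)) by (lia || apply Ex); simpl Nat.pred.
  assert (0 <= sum_f_R0 (c N) K) by (apply cond_pos_sum, Hc).
  assert (0 <= Series (fun k => c N (S K + k)%nat)).
  { apply Series_ge_0; [intros; apply Hc | apply ex_series_incr_n, Ex]. }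
  specialize (HK N).
  rewrite Rabs_right in HN0 |- * by lra.
  lra.
Qed.

Lemma abs_sub_cube_le (x y e : R) :
  0 <= x <= e -> 0 <= y <= e -> Rabs (x - y) ^ 3 <= e * (x ^ 2 + y ^ 2).
Proof.
  intros Hx Hy.
  assert (Hd : Rabs (x - y) <= e) by (apply Rabs_le; lra).
  assert (Hs : Rabs (x - y) ^ 2 <= x ^ 2 + y ^ 2) by (rewrite pow2_abs; nra).
  replace (Rabs (x - y) ^ 3) with (Rabs (x - y) * Rabs (x - y) ^ 2) by ring.
  apply Rmult_le_compat; auto using Rabs_pos, pow_le.
Qed.

Lemma nonincr_sum_f_R0_ge (b : nat -> R) (i : nat) :
  (forall k, b (S k) <= b k) -> INR (S i) * b i <= sum_f_R0 b i.
Proof.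
  intros Hb; induction i as [|i IH]; [simpl; lra|].
  rewrite tech5, S_INR.
  specialize (Hb i).
  assert (0 <= INR (S i)) by apply pos_INR.
  nra.
Qed.

Lemma nonincr_nonneg_le_0 (a : nat -> R) (i : nat) :
  nonincr_nonneg a -> a i <= a 0%nat.
Proof.
  intros [_ Ha]; induction i as [|i IH]; [lra|].
  specialize (Ha i); lra.
Qed.

Definition nonincr_sq_le (B : R) (a : nat -> R) : Prop :=
  nonincr_nonneg a /\ ex_series (fun i => a i ^ 2) /\ Series (fun i => a i ^ 2) <= B.

Lemma nonincr_sq_le_ge_0 (B : R) (a : nat -> R) : nonincr_sq_le B a -> 0 <= B.
Proof.
  intros (_ & Ex & HB).
  assert (0 <= Series (fun i => a i ^ 2)) by (apply Series_ge_0; auto using pow2_ge_0).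
  lra.
Qed.

Lemma nonincr_sq_le_succ_mul (B : R) (a : nat -> R) (i : nat) :
  nonincr_sq_le B a -> INR (S i) * a i ^ 2 <= B.
Proof.
  intros ([Hpos Hdec] & Ex & HB).
  assert (Hsq : forall k, a (S k) ^ 2 <= a k ^ 2).
  { intros k; specialize (Hpos (S k)); specialize (Hdec k); nra. }
  pose proof (nonincr_sum_f_R0_ge _ i Hsq).
  destruct (Series_head_tail_le (fun k => a k ^ 2) i) as [Hhead _]; auto using pow2_ge_0.
  lra.
Qed.

Lemma nonincr_sq_le_eventually_small (B eta : R) :
  0 < eta -> exists K, forall a, nonincr_sq_le B a -> forall i, (K <= i)%nat -> a i <= eta.
Proof.
  intros He.
  destruct (INR_archimed (eta ^ 2) B) as [K HK]; [nra|].
  exists K; intros a Ha i Hi.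
  pose proof (nonincr_sq_le_succ_mul B a i Ha).
  assert (INR K <= INR (S i)) by (apply le_INR; lia).
  pose proof (pos_INR K).
  destruct Ha as ([Hpos _] & _).
  specialize (Hpos i).
  destruct (Rle_or_lt (a i) eta) as [|Hgt]; [assumption|].
  assert (eta ^ 2 < a i ^ 2) by nra.
  nra.
Qed.

Lemma ex_series_scal_sq_plus (c : R) (a b : nat -> R) :
  ex_series (fun i => a i ^ 2) -> ex_series (fun i => b i ^ 2) ->
  ex_series (fun i => c * (a i ^ 2 + b i ^ 2)).
Proof.
  intros Exa Exb.
  apply (ex_series_scal_l c (fun i => a i ^ 2 + b i ^ 2)).
  exact (ex_series_plus (fun i => a i ^ 2) (fun i => b i ^ 2) Exa Exb).
Qed.

Lemma ex_series_abs_sub_cube (a b : nat -> R) :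
  nonincr_nonneg a -> nonincr_nonneg b ->
  ex_series (fun i => a i ^ 2) -> ex_series (fun i => b i ^ 2) ->
  ex_series (fun i => Rabs (a i - b i) ^ 3).
Proof.
  intros Ha Hb Exa Exb.
  apply (@ex_series_le R_AbsRing R_CompleteNormedModule _ (fun i => (a 0%nat + b 0%nat) * (a i ^ 2 + b i ^ 2))).
  - intros i; change (Rabs (Rabs (a i - b i) ^ 3) <= (a 0%nat + b 0%nat) * (a i ^ 2 + b i ^ 2)).
    rewrite Rabs_right by (apply Rle_ge, pow_le, Rabs_pos).
    pose proof (nonincr_nonneg_le_0 a i Ha); pose proof (nonincr_nonneg_le_0 b i Hb).
    destruct Ha as [Ha _]; destruct Hb as [Hb _].
    specialize (Ha i); specialize (Hb i).
    apply abs_sub_cube_le; lra.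
  - apply ex_series_scal_sq_plus; assumption.
Qed.

Lemma Series_abs_sub_cube_tail_le (B eta : R) (K : nat) (a b : nat -> R) :
  (forall i, (K <= i)%nat -> a i <= eta) -> (forall i, (K <= i)%nat -> b i <= eta) ->
  nonincr_sq_le B a -> nonincr_sq_le B b ->
  Series (fun k => Rabs (a (S K + k)%nat - b (S K + k)%nat) ^ 3) <= eta * (2 * B).
Proof.
  intros HaK HbK Ha Hb.
  pose proof Ha as ([Ha0 _] & Exa & HBa); pose proof Hb as ([Hb0 _] & Exb & HBb).
  set (q := fun i => eta * (a i ^ 2 + b i ^ 2)).
  assert (Exq : ex_series q) by (apply ex_series_scal_sq_plus; assumption).
  assert (Hq : Series q = eta * (Series (fun i => a i ^ 2) + Series (fun i => b i ^ 2))).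
  { unfold q; rewrite Series_scal_l, Series_plus by assumption; reflexivity. }
  assert (He : 0 <= eta).
  { specialize (HaK K (Nat.le_refl K)); specialize (Ha0 K); lra. }
  apply Rle_trans with (Series (fun k => q (S K + k)%nat)).
  - apply Series_le; [|apply ex_series_incr_n, Exq].
    intros k; split; [apply pow_le, Rabs_pos|].
    apply abs_sub_cube_le; split; auto; [apply HaK | apply HbK]; lia.
  - destruct (Series_head_tail_le q K) as [_ Htail]; [|exact Exq|].
    { intros i; unfold q; pose proof (pow2_ge_0 (a i)); pose proof (pow2_ge_0 (b i)); nra. }
    assert (eta * (Series (fun i => a i ^ 2) + Series (fun i => b i ^ 2)) <= eta * (2 * B))
      by (apply Rmult_le_compat_l; lra).
    lra.
Qed.

Theorem is_lim_seq_Series_abs_sub_cube (B : R) (aN : nat -> nat -> R) (a : nat -> R) :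
  (forall N, nonincr_sq_le B (aN N)) -> nonincr_sq_le B a ->
  (forall i, is_lim_seq (fun N => aN N i) (a i)) ->
  (forall N, ex_series (fun i => Rabs (aN N i - a i) ^ 3)) /\
  is_lim_seq (fun N => Series (fun i => Rabs (aN N i - a i) ^ 3)) 0.
Proof.
  intros HaN Ha Hlim.
  assert (Ex : forall N, ex_series (fun i => Rabs (aN N i - a i) ^ 3)).
  { intros N; destruct (HaN N) as (? & ? & _); destruct Ha as (? & ? & _).
    apply ex_series_abs_sub_cube; assumption. }
  split; [exact Ex|].
  apply is_lim_seq_Series_0; [intros; apply pow_le, Rabs_pos | exact Ex | |].
  - intros i; apply is_lim_seq_pow_0, (is_lim_seq_abs_0 (fun N => aN N i - a i)).
    rewrite <- (Rminus_eq_0 (a i)).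
    apply is_lim_seq_minus'; [apply Hlim | apply is_lim_seq_const].
  - intros eps Heps.
    pose proof (nonincr_sq_le_ge_0 B a Ha) as HB.
    set (eta := eps / (2 * B + 1)).
    assert (Heta : 0 < eta) by (apply Rdiv_lt_0_compat; lra).
    assert (eta * (2 * B + 1) = eps) by (unfold eta; field; lra).
    assert (Hle : eta * (2 * B) <= eps) by nra.
    destruct (nonincr_sq_le_eventually_small B eta Heta) as [K HK].
    exists K; intros N.
    pose proof (Series_abs_sub_cube_tail_le B eta K (aN N) a
                  (HK _ (HaN N)) (HK _ Ha) (HaN N) Ha).
    lra.
Qed.

Lemma nonincr_sq_le_mono (B B' : R) (a : nat -> R) :
  B <= B' -> nonincr_sq_le B a -> nonincr_sq_le B' a.
Proof. intros HB (Ha & Ex & HS); exact (conj Ha (conj Ex (Rle_trans _ _ _ HS HB))). Qed.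

Lemma in_Omega_hat_sq_le (ap am : nat -> R) (g1 d : R) :
  in_Omega_hat ap am g1 d -> nonincr_sq_le d ap /\ nonincr_sq_le d am.
Proof.
  intros (Hp & Hm & _ & Ep & Em & Hd).
  assert (0 <= Series (fun i => ap i ^ 2)) by (apply Series_ge_0; auto using pow2_ge_0).
  assert (0 <= Series (fun i => am i ^ 2)) by (apply Series_ge_0; auto using pow2_ge_0).
  split; (split; [assumption | split; [assumption | lra]]).
Qed.

Theorem lemma5p3
  (apN amN : nat -> nat -> R) (g1N dN : nat -> R)
  (ap am : nat -> R) (g1 d : R)
  (HN : forall N, in_Omega_hat (apN N) (amN N) (g1N N) (dN N))
  (H : in_Omega_hat ap am g1 d)
  (Cap : forall i, is_lim_seq (fun N => apN N i) (ap i))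
  (Cam : forall i, is_lim_seq (fun N => amN N i) (am i))
  (Cg : is_lim_seq g1N g1)
  (Cd : is_lim_seq dN d) :
  ((forall N, ex_series (fun i => (Rabs (apN N i - ap i))^3)) /\
   is_lim_seq (fun N => Series (fun i => (Rabs (apN N i - ap i))^3)) 0) /\
  ((forall N, ex_series (fun i => (Rabs (amN N i - am i))^3)) /\
   is_lim_seq (fun N => Series (fun i => (Rabs (amN N i - am i))^3)) 0).
Proof.
  destruct (is_lim_seq_bounded_above dN d Cd) as [M HM].
  set (B := Rmax M d).
  assert (HNB : forall N, nonincr_sq_le B (apN N) /\ nonincr_sq_le B (amN N)).
  { intros N; destruct (in_Omega_hat_sq_le _ _ _ _ (HN N)) as [Hp Hm].
    assert (dN N <= B) by (apply Rle_trans with M; [apply HM | apply Rmax_l]).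
    split; eapply nonincr_sq_le_mono; eauto. }
  destruct (in_Omega_hat_sq_le _ _ _ _ H) as [Hp Hm].
  assert (d <= B) by apply Rmax_r.
  split; apply (is_lim_seq_Series_abs_sub_cube B); try apply HNB;
    eauto using nonincr_sq_le_mono.
Qed.
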